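(* Let $s=2$ and consider problem (P) in the context, which has the single variable $I_1=P_2$ (with $P_1=P_{\max}-P_2$). Then the optimal power allocation $(P_1^{**},P_2^{**})$ satisfies: 1. if $\alpha_1<\beta_1$, then $P_1^{**}=P_{\max}$ (so $P_2^{**}=0$); 2. if $h_2\beta_1<h_0\alpha_1$, then $P_2^{**}=P_{\max}$; 3. if $\alpha_1>\beta_1$ and $h_2\beta_1>h_0\alpha_1$, then $P_2^{**}=\min(r_1,P_{\max})$, where $r_1:=\frac{\alpha_1-\beta_1}{h_2\beta_1-h_0\alpha_1}$.
   Context: Parameters: - $P_{\max}>0$ and positive reals $h_0<h_1<h_2$. - Probabilities $\delta_0,\delta_1,\delta_2$ summing to $1$. - $\theta_1=\delta_0$, $\theta_2=\delta_0+\delta_1$, and $\Delta_k=\theta_k(1-\theta_k)$. - $\alpha_1:=(h_2-h_1)\Delta_2$ and $\beta_1:=(h_1-h_0)\Delta_1$. Problem (P). Over $P_1,P_2\ge0$ with $P_1+P_2=P_{\max}$, maximize $\Delta_1LR_1+\Delta_2LR_2$, where - $R_1=\frac12\big[\log\big(1+\frac{h_1P_1}{1+h_1P_2}\big)-\log\big(1+\frac{h_0P_1}{1+h_0P_2}\big)\big]$, - $R_2=\frac12\big[\log(1+h_2P_2)-\log(1+h_1P_2)\big]$. *)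

From Stdlib Require Import Reals Lra.
Open Scope R_scope.

Definition theta1 (d0 d1 d2 : R) : R := d0.
Definition theta2 (d0 d1 d2 : R) : R := d0 + d1.
Definition Delta (t : R) : R := t * (1 - t).

Definition alpha1 (h0 h1 h2 d0 d1 d2 : R) : R :=
  (h2 - h1) * Delta (theta2 d0 d1 d2).
Definition beta1 (h0 h1 h2 d0 d1 d2 : R) : R :=
  (h1 - h0) * Delta (theta1 d0 d1 d2).

(* rates R_1, R_2 (natural log; the base is irrelevant) *)
Definition Rate1 (h0 h1 P1 P2 : R) : R :=
  / 2 * (ln (1 + h1 * P1 / (1 + h1 * P2)) - ln (1 + h0 * P1 / (1 + h0 * P2))).
Definition Rate2 (h1 h2 P2 : R) : R :=
  / 2 * (ln (1 + h2 * P2) - ln (1 + h1 * P2)).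

Definition objP (L h0 h1 h2 d0 d1 d2 P1 P2 : R) : R :=
  Delta (theta1 d0 d1 d2) * L * Rate1 h0 h1 P1 P2
  + Delta (theta2 d0 d1 d2) * L * Rate2 h1 h2 P2.

Definition feasible (Pmax P1 P2 : R) : Prop :=
  0 <= P1 /\ 0 <= P2 /\ P1 + P2 = Pmax.

Definition optimalP (L Pmax h0 h1 h2 d0 d1 d2 P1 P2 : R) : Prop :=
  feasible Pmax P1 P2 /\
  forall Q1 Q2, feasible Pmax Q1 Q2 ->
    objP L h0 h1 h2 d0 d1 d2 Q1 Q2 <= objP L h0 h1 h2 d0 d1 d2 P1 P2.

(* Substituting P1 = Pmax - P2, the objective is, up to the factor L/2 and an
   additive constant, F(x) = D1 (ln(1+h0 x) - ln(1+h1 x)) + D2 (ln(1+h2 x) - ln(1+h1 x))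
   with x = P2.  The numerator of F' is the affine function
   (alpha1 - beta1) + x (h0 alpha1 - h2 beta1), so F is increasing up to its root
   r1 and decreasing beyond it (or monotone when there is no positive root).  The
   maximiser over [0, Pmax] is therefore 0, Pmax or min(r1, Pmax). *)

From Pilot Require Import Defs.
From Stdlib Require Import Reals Lra.
From Coquelicot Require Import Coquelicot.
Open Scope R_scope.

Lemma lt_of_derive_pos (f f' : R -> R) (a b : R) : a < b ->
  (forall x, a <= x <= b -> derivable_pt_lim f x (f' x)) ->
  (forall x, a < x < b -> 0 < f' x) ->
  f a < f b.
Proof.
intros Hab Hder Hpos.
destruct (MVT_cor2 f f' a b Hab Hder) as [c [Ec Hc]].
pose proof (Hpos c Hc). nra.
Qed.

Lemma lt_of_derive_neg (f f' : R -> R) (a b : R) : a < b ->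
  (forall x, a <= x <= b -> derivable_pt_lim f x (f' x)) ->
  (forall x, a < x < b -> f' x < 0) ->
  f b < f a.
Proof.
intros Hab Hder Hneg.
enough (- f a < - f b) by lra.
apply (lt_of_derive_pos (- f)%F (fun x => - f' x) a b Hab).
- intros x Hx. now apply derivable_pt_lim_opp, Hder.
- intros x Hx. pose proof (Hneg x Hx). lra.
Qed.

Lemma argmax_unimodal (F : R -> R) (lo hi y p : R) :
  lo <= y <= hi -> lo <= p <= hi ->
  (forall z, lo <= z <= hi -> F z <= F p) ->
  (forall u v, lo <= u -> u < v -> v <= y -> F u < F v) ->
  (forall u v, y <= u -> u < v -> v <= hi -> F v < F u) ->
  p = y.
Proof.
intros Hy Hp Hmax Hinc Hdec.
destruct (Rtotal_order p y) as [Hlt | [Heq | Hgt]]; [exfalso | exact Heq | exfalso].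
- pose proof (Hinc p y ltac:(lra) Hlt (Rle_refl y)). pose proof (Hmax y ltac:(lra)). lra.
- pose proof (Hdec y p (Rle_refl y) Hgt ltac:(lra)). pose proof (Hmax y ltac:(lra)). lra.
Qed.

(* Coquelicot also defines [Delta], hence the qualified [Defs.Delta]. *)
Lemma Delta_ge0 (t : R) : 0 <= t <= 1 -> 0 <= Defs.Delta t.
Proof. intros Ht. unfold Defs.Delta. nra. Qed.

Section ReducedObjective.

Variables h0 h1 h2 D1 D2 : R.
Hypotheses (h0_gt0 : 0 < h0) (h1_gt0 : 0 < h1) (h2_gt0 : 0 < h2).

Definition reduced_obj (x : R) : R :=
  D1 * (ln (1 + h0 * x) - ln (1 + h1 * x)) + D2 * (ln (1 + h2 * x) - ln (1 + h1 * x)).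

Definition reduced_obj_num (x : R) : R :=
  (h2 - h1) * D2 * (1 + h0 * x) - (h1 - h0) * D1 * (1 + h2 * x).

Definition reduced_obj_den (x : R) : R := (1 + h0 * x) * (1 + h1 * x) * (1 + h2 * x).

Lemma reduced_obj_den_gt0 (x : R) : 0 <= x -> 0 < reduced_obj_den x.
Proof.
intros Hx. unfold reduced_obj_den.
apply Rmult_lt_0_compat; [apply Rmult_lt_0_compat|]; nra.
Qed.

Lemma reduced_obj_derive (x : R) : 0 <= x ->
  derivable_pt_lim reduced_obj x (reduced_obj_num x / reduced_obj_den x).
Proof.
intros Hx.
assert (0 < 1 + h0 * x) by nra. assert (0 < 1 + h1 * x) by nra.
assert (0 < 1 + h2 * x) by nra.
apply is_derive_Reals. unfold reduced_obj.
auto_derive; [repeat split; lra |].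
unfold reduced_obj_num, reduced_obj_den. field. lra.
Qed.

Lemma reduced_obj_increasing (u v : R) : 0 <= u < v ->
  (forall c, u < c < v -> 0 < reduced_obj_num c) ->
  reduced_obj u < reduced_obj v.
Proof.
intros Huv Hnum.
apply (lt_of_derive_pos _ (fun x => reduced_obj_num x / reduced_obj_den x)); [lra | |].
- intros x Hx. apply reduced_obj_derive. lra.
- intros x Hx. apply Rdiv_lt_0_compat; [now apply Hnum | apply reduced_obj_den_gt0; lra].
Qed.

Lemma reduced_obj_decreasing (u v : R) : 0 <= u < v ->
  (forall c, u < c < v -> reduced_obj_num c < 0) ->
  reduced_obj v < reduced_obj u.
Proof.
intros Huv Hnum.
apply (lt_of_derive_neg _ (fun x => reduced_obj_num x / reduced_obj_den x)); [lra | |].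
- intros x Hx. apply reduced_obj_derive. lra.
- intros x Hx. apply Rdiv_neg_pos; [now apply Hnum | apply reduced_obj_den_gt0; lra].
Qed.

End ReducedObjective.

Lemma objP_feasible (L Pmax h0 h1 h2 d0 d1 d2 Q1 Q2 : R) :
  0 < h0 -> 0 < h1 -> feasible Pmax Q1 Q2 ->
  objP L h0 h1 h2 d0 d1 d2 Q1 Q2 =
  L / 2 * (Defs.Delta (theta1 d0 d1 d2) * (ln (1 + h1 * Pmax) - ln (1 + h0 * Pmax))
     + reduced_obj h0 h1 h2 (Defs.Delta (theta1 d0 d1 d2)) (Defs.Delta (theta2 d0 d1 d2)) Q2).
Proof.
intros H0 H1 [F1 [F2 F3]].
assert (0 < 1 + h0 * Q2) by nra. assert (0 < 1 + h1 * Q2) by nra.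
assert (0 < 1 + h0 * Pmax) by nra. assert (0 < 1 + h1 * Pmax) by nra.
unfold objP, Rate1, Rate2, reduced_obj.
replace Q1 with (Pmax - Q2) by lra.
replace (1 + h1 * (Pmax - Q2) / (1 + h1 * Q2)) with ((1 + h1 * Pmax) / (1 + h1 * Q2))
  by (field; lra).
replace (1 + h0 * (Pmax - Q2) / (1 + h0 * Q2)) with ((1 + h0 * Pmax) / (1 + h0 * Q2))
  by (field; lra).
rewrite !ln_div by lra. field.
Qed.

Lemma optimalP_reduced_max (L Pmax h0 h1 h2 d0 d1 d2 P1 P2 : R) :
  0 < L -> 0 < h0 -> 0 < h1 ->
  optimalP L Pmax h0 h1 h2 d0 d1 d2 P1 P2 ->
  forall y, 0 <= y <= Pmax ->
  reduced_obj h0 h1 h2 (Defs.Delta (theta1 d0 d1 d2)) (Defs.Delta (theta2 d0 d1 d2)) y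
  <= reduced_obj h0 h1 h2 (Defs.Delta (theta1 d0 d1 d2)) (Defs.Delta (theta2 d0 d1 d2)) P2.
Proof.
intros HL H0 H1 [Hf Hopt] y Hy.
assert (Hfy : feasible Pmax (Pmax - y) y) by (unfold feasible; lra).
pose proof (Hopt _ _ Hfy) as Ho.
rewrite (objP_feasible L Pmax h0 h1 h2 d0 d1 d2 _ _ H0 H1 Hfy),
        (objP_feasible L Pmax h0 h1 h2 d0 d1 d2 _ _ H0 H1 Hf) in Ho.
apply Rmult_le_reg_l in Ho; lra.
Qed.

Theorem lemma2 (L Pmax h0 h1 h2 d0 d1 d2 P1 P2 : R) :
  0 < L -> 0 < Pmax ->
  0 < h0 -> h0 < h1 -> h1 < h2 ->
  0 <= d0 -> 0 <= d1 -> 0 <= d2 -> d0 + d1 + d2 = 1 ->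
  optimalP L Pmax h0 h1 h2 d0 d1 d2 P1 P2 ->
  let a1 := alpha1 h0 h1 h2 d0 d1 d2 in
  let b1 := beta1 h0 h1 h2 d0 d1 d2 in
  (a1 < b1 -> P1 = Pmax /\ P2 = 0) /\
  (h2 * b1 < h0 * a1 -> P2 = Pmax) /\
  (a1 > b1 -> h2 * b1 > h0 * a1 ->
     P2 = Rmin ((a1 - b1) / (h2 * b1 - h0 * a1)) Pmax).
Proof.
intros HL HP H0 H01 H12 Hd0 Hd1 Hd2 Hs Hopt a1 b1.
set (D1 := Defs.Delta (theta1 d0 d1 d2)). set (D2 := Defs.Delta (theta2 d0 d1 d2)).
set (F := reduced_obj h0 h1 h2 D1 D2).
assert (Ha1 : 0 <= a1) by (apply Rmult_le_pos; [lra | apply Delta_ge0; unfold theta2; lra]).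
assert (Hb1 : 0 <= b1) by (apply Rmult_le_pos; [lra | apply Delta_ge0; unfold theta1; lra]).
assert (Hnum : forall c, reduced_obj_num h0 h1 h2 D1 D2 c = (a1 - b1) + c * (h0 * a1 - h2 * b1))
  by (intro c; unfold reduced_obj_num, a1, b1, alpha1, beta1, D1, D2; ring).
assert (Hmax := optimalP_reduced_max L Pmax h0 h1 h2 d0 d1 d2 P1 P2 HL H0 ltac:(lra) Hopt).
destruct Hopt as [[HP1 [HP2 Hsum]] _].
assert (Hunimodal : forall y, 0 <= y <= Pmax ->
  (forall c, 0 < c < y -> 0 < (a1 - b1) + c * (h0 * a1 - h2 * b1)) ->
  (forall c, y < c < Pmax -> (a1 - b1) + c * (h0 * a1 - h2 * b1) < 0) -> P2 = y).
{ intros y Hy Hinc Hdec.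
  apply (argmax_unimodal F 0 Pmax y P2 Hy ltac:(lra) Hmax).
  - intros u v Hu Huv Hv. apply reduced_obj_increasing; try lra.
    intros c Hc. rewrite Hnum. apply Hinc. lra.
  - intros u v Hu Huv Hv. apply reduced_obj_decreasing; try lra.
    intros c Hc. rewrite Hnum. apply Hdec. lra. }
split; [|split].
- intros Hab. enough (P2 = 0) by lra.
  assert (h0 * a1 <= h2 * b1) by nra.
  apply Hunimodal; [lra | intros; lra | intros; nra].
- intros Hab. assert (b1 < a1) by nra.
  apply Hunimodal; [lra | intros; nra | intros; lra].
- intros Hab Hba.
  set (r := (a1 - b1) / (h2 * b1 - h0 * a1)).
  assert (Hr : r * (h2 * b1 - h0 * a1) = a1 - b1) by (unfold r; field; lra).
  assert (0 < r) by (apply Rdiv_lt_0_compat; lra).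
  pose proof (Rmin_l r Pmax). pose proof (Rmin_r r Pmax).
  assert (0 < Rmin r Pmax) by (apply Rmin_glb_lt; lra).
  apply Hunimodal; [lra | intros c Hc; nra | intros c Hc].
  assert (r < c) by (unfold Rmin in *; destruct (Rle_dec r Pmax); lra).
  nra.
Qed.
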